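(* Let $E$ be a closed term with $\vdash E:(\neg X\to X)\to X$, where $X$ is a propositional variable. Then for each term $u$, each finite sequence of terms $\bar w$ and each sequence of terms $(v_i)_{i\in\mathbb N^*}$, there exist $m\in\mathbb N$ and terms $\theta_1,\dots,\theta_m$ such that: $(E\;u)\;\bar w\triangleright^*\underline{\mu}.((u\;\theta_1)\;\bar w)$; $(\theta_i\;v_i)\triangleright^*\underline{\mu}.((u\;\theta_{i+1})\;\bar w)$ for all $1\le i\le m-1$; and $(\theta_m\;v_m)\triangleright^*\underline{\mu}.(v_i\;\bar w)$ for some $1\le i\le m$.
   Context: $\lambda\mu$-terms: $t::= x\mid \lambda x.t\mid (t\;t)\mid \mu a.t\mid (a\;t)$ over disjoint infinite sets of $\lambda$-variables and $\mu$-variables; types built from propositional variables and $\perp$ with $\to$; $\neg A$ denotes $A\to\perp$. Reduction $(\lambda x.u\;v)\triangleright u[x:=v]$, $(\mu a.u\;v)\triangleright\mu a.u[a:=^*v]$ ($u[a:=^*v]$ replaces each subterm $(a\;w)$ of $u$ by $(a\;(w\;v))$), $\triangleright^*$ its reflexive transitive compatible closure. Typing rules: (ax) $\Gamma\vdash x:A;\Delta$ if $x:A\in\Gamma$; ($\to_i$) from $\Gamma,x:A\vdash t:B;\Delta$ infer $\Gamma\vdash\lambda x.t:A\to B;\Delta$; ($\to_e$) from $\Gamma\vdash u:A\to B;\Delta$, $\Gamma\vdash v:A;\Delta$ infer $\Gamma\vdash(u\;v):B;\Delta$; ($\mu$) from $\Gamma\vdash t:\perp;\Delta,a:A$ infer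 $\Gamma\vdash\mu a.t:A;\Delta$; ($\perp$) from $\Gamma\vdash t:A;\Delta,a:A$ infer $\Gamma\vdash(a\;t):\perp;\Delta,a:A$; $\vdash$ means empty contexts. For a sequence $\bar w=w_1\dots w_n$, $t\;\bar w=((t\;w_1)\dots w_n)$. For a term $t$, $M_t$ is the smallest set containing $t$ such that $s\in M_t$ and $a$ a $\mu$-variable imply $\mu a.s\in M_t$ and $(a\;s)\in M_t$; $\underline{\mu}.t$ denotes an arbitrary element of $M_t$ (different occurrences may denote different elements). *)

(* Lambda-mu calculus with de Bruijn indices, two separate
   index spaces: lambda-variables (Var x) and mu-variables (MApp a t). *)
From Stdlib Require Import Arith List.
Import ListNotations.

Inductive term : Type :=
| Var  : nat -> term
| Lam  : term -> term
| App  : term -> term -> term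
| Mu   : term -> term
| MApp : nat -> term -> term.

Definition upren (f : nat -> nat) : nat -> nat :=
  fun n => match n with 0 => 0 | S k => S (f k) end.

Fixpoint lren (f : nat -> nat) (t : term) : term :=
  match t with
  | Var x => Var (f x)
  | Lam t => Lam (lren (upren f) t)
  | App t1 t2 => App (lren f t1) (lren f t2)
  | Mu t => Mu (lren f t)
  | MApp a t => MApp a (lren f t)
  end.

Fixpoint mren (f : nat -> nat) (t : term) : term :=
  match t with
  | Var x => Var x
  | Lam t => Lam (mren f t)
  | App t1 t2 => App (mren f t1) (mren f t2)
  | Mu t => Mu (mren (upren f) t)
  | MApp a t => MApp (f a) (mren f t)
  end.

Definition upsub (s : nat -> term) : nat -> term :=
  fun n => match n with 0 => Var 0 | S k => lren S (s k) end.

Fixpoint lsubst (s : nat -> term) (t : term) : term :=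
  match t with
  | Var x => s x
  | Lam t => Lam (lsubst (upsub s) t)
  | App t1 t2 => App (lsubst s t1) (lsubst s t2)
  | Mu t => Mu (lsubst (fun n => mren S (s n)) t)
  | MApp a t => MApp a (lsubst s t)
  end.

Definition subst0 (u v : term) : term :=
  lsubst (fun n => match n with 0 => v | S k => Var k end) u.

(* structural substitution u[a :=* v]: each subterm (a w) becomes (a (w v)) *)
Fixpoint ssub (k : nat) (v : term) (t : term) : term :=
  match t with
  | Var x => Var x
  | Lam t => Lam (ssub k (lren S v) t)
  | App t1 t2 => App (ssub k v t1) (ssub k v t2)
  | Mu t => Mu (ssub (S k) (mren S v) t)
  | MApp a t =>
      if Nat.eqb a k then MApp a (App (ssub k v t) v)
      else MApp a (ssub k v t)
  end.

Inductive step : term -> term -> Prop :=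
| st_beta : forall u v, step (App (Lam u) v) (subst0 u v)
| st_mu : forall u v, step (App (Mu u) v) (Mu (ssub 0 (mren S v) u))
| st_lam : forall t t', step t t' -> step (Lam t) (Lam t')
| st_appl : forall t t' s, step t t' -> step (App t s) (App t' s)
| st_appr : forall t s s', step s s' -> step (App t s) (App t s')
| st_mu_c : forall t t', step t t' -> step (Mu t) (Mu t')
| st_mapp : forall a t t', step t t' -> step (MApp a t) (MApp a t').

Inductive red : term -> term -> Prop :=
| red_refl : forall t, red t t
| red_step : forall t1 t2 t3, step t1 t2 -> red t2 t3 -> red t1 t3.

Inductive ty : Type :=
| TVar : nat -> ty
| Bot  : ty
| Arr  : ty -> ty -> ty.

Definition neg (A : ty) : ty := Arr A Bot.

(* Gamma |- t : A ; Delta   (contexts indexed by de Bruijn indices) *)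
Inductive typ : list ty -> list ty -> term -> ty -> Prop :=
| ty_ax : forall G D x A, nth_error G x = Some A -> typ G D (Var x) A
| ty_lam : forall G D t A B, typ (A :: G) D t B -> typ G D (Lam t) (Arr A B)
| ty_app : forall G D u v A B,
    typ G D u (Arr A B) -> typ G D v A -> typ G D (App u v) B
| ty_mu : forall G D t A, typ G (A :: D) t Bot -> typ G D (Mu t) A
| ty_bot : forall G D a t A,
    nth_error D a = Some A -> typ G D t A -> typ G D (MApp a t) Bot.

Definition apps (t : term) (ws : list term) : term := fold_left App ws t.

(* Binding the free mu-variable a by a new mu-binder: de Bruijn rendering of
   the named "mu a. s": a |-> 0, j |-> j+1 for j < a, j |-> j for j > a. *)
Definition bindm (a : nat) : nat -> nat :=
  fun j => if Nat.eqb j a then 0 else if Nat.ltb j a then S j else j.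

Inductive inM (t : term) : term -> Prop :=
| inM_base : inM t t
| inM_mu : forall a s, inM t s -> inM t (Mu (mren (bindm a) s))
| inM_app : forall a s, inM t s -> inM t (MApp a s).

(* s |>* mu.t, i.e. s reduces to some element of M_t *)
Definition redM (s t : term) : Prop := exists s', red s s' /\ inM t s'.

(** Interpret every propositional variable by the single stack
   [ws], [Bot] by the empty stack, and [A -> B] by the stacks [s :: pi] with
   [s] a realizer of [A] and [pi] a stack of [B]; a realizer of [A] is a term
   that, applied to any stack of [A], reduces to an observable term. At level
   [k] the observable terms are the [mu]/[(a _)]-wrappings of [v_i ws] with
   [i <= k] and of [u th ws] where [th v_(k+1)] reduces to an observable term
   at level [k+1]. Each [v_i] realizes [X] from level [i] on, hence [u]
   realizes [~X -> X], and by adequacy of the typing rules [E u ws] is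
   observable at level 0; the (finite) derivation of this fact is the
   sequence [th_1, ..., th_m].

   Adequacy for [mu] needs substitutions that also append a stack to the body
   of every [(a t)], as the [mu] rule does to [mu a. t] applied to several
   arguments. Since mu-binders shift the free mu-variables of [u], [ws] and
   [v], observability is relative to a world [(k, f)] with [f] the
   accumulated injective renaming, undone at the end by choosing fresh binder
   names. *)

From Stdlib Require Import Arith List Lia FunctionalExtensionality FinFun.
Import ListNotations.

(** * Renaming and substitution *)

Lemma mren_comp t : forall f g, mren f (mren g t) = mren (fun x => f (g x)) t.
Proof.
  induction t; intros f g; simpl; f_equal; auto.
  rewrite IHt. f_equal. apply functional_extensionality; intros [|x]; reflexivity.
Qed.

Lemma mren_id t : mren (fun x => x) t = t.
Proof.
  induction t; simpl; f_equal; auto.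
  rewrite <- IHt at 2. f_equal. apply functional_extensionality; intros [|x]; reflexivity.
Qed.

Lemma map_mren_id l : map (mren (fun x => x)) l = l.
Proof. rewrite (map_ext _ (fun x => x)) by apply mren_id. apply map_id. Qed.

Lemma lren_comp t : forall f g, lren f (lren g t) = lren (fun x => f (g x)) t.
Proof.
  induction t; intros f g; simpl; f_equal; auto.
  rewrite IHt. f_equal. apply functional_extensionality; intros [|x]; reflexivity.
Qed.

Lemma lren_mren t : forall f g, lren f (mren g t) = mren g (lren f t).
Proof. induction t; intros f g; simpl; f_equal; auto. Qed.

Lemma lsubst_lren t : forall s g, lsubst s (lren g t) = lsubst (fun x => s (g x)) t.
Proof.
  induction t; intros s g; simpl; f_equal; auto.
  - rewrite IHt. f_equal. apply functional_extensionality; intros [|x]; reflexivity.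
  - apply IHt.
Qed.

Lemma lren_lsubst t : forall s g, lren g (lsubst s t) = lsubst (fun x => lren g (s x)) t.
Proof.
  induction t; intros s g; simpl; f_equal; auto.
  - rewrite IHt. f_equal. apply functional_extensionality; intros [|x]; simpl; auto.
    rewrite !lren_comp. reflexivity.
  - rewrite IHt. f_equal. apply functional_extensionality; intros x. apply lren_mren.
Qed.

Lemma mren_lsubst t : forall s h,
  mren h (lsubst s t) = lsubst (fun x => mren h (s x)) (mren h t).
Proof.
  induction t; intros s h; simpl; f_equal; auto.
  - rewrite IHt. f_equal. apply functional_extensionality; intros [|x]; simpl; auto.
    rewrite lren_mren. reflexivity.
  - rewrite IHt. f_equal. apply functional_extensionality; intros x.
    rewrite !mren_comp. reflexivity.
Qed.

Lemma lsubst_var t : lsubst Var t = t.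
Proof.
  induction t; simpl; f_equal; auto.
  rewrite <- IHt at 2. f_equal. apply functional_extensionality; intros [|x]; reflexivity.
Qed.

Lemma id_injective : Injective (fun x : nat => x).
Proof. intros x y E. exact E. Qed.

Lemma compose_injective (g h : nat -> nat) :
  Injective g -> Injective h -> Injective (fun x => g (h x)).
Proof. intros Hg Hh x y E. apply Hh, Hg, E. Qed.

Lemma upren_injective h : Injective h -> Injective (upren h).
Proof.
  intros Hh [|x] [|y] E; simpl in E; try discriminate; [reflexivity|].
  injection E as E. f_equal. apply Hh, E.
Qed.

Lemma mren_subst0 u v h : mren h (subst0 u v) = subst0 (mren h u) (mren h v).
Proof.
  unfold subst0. rewrite mren_lsubst. f_equal.
  apply functional_extensionality; intros [|x]; reflexivity.
Qed.

Lemma mren_ssub t : forall k v h,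
  Injective h -> mren h (ssub k v t) = ssub (h k) (mren h v) (mren h t).
Proof.
  induction t; intros k w h Hh; simpl; try (f_equal; auto; fail).
  - f_equal. rewrite IHt by auto. f_equal. symmetry. apply lren_mren.
  - f_equal. rewrite IHt by (apply upren_injective; auto). simpl. f_equal.
    rewrite !mren_comp. reflexivity.
  - destruct (Nat.eqb_spec n k) as [->|Hn].
    + rewrite Nat.eqb_refl. simpl. f_equal. f_equal; auto.
    + destruct (Nat.eqb_spec (h n) (h k)) as [E|_].
      * exfalso. apply Hn, Hh, E.
      * simpl. f_equal. auto.
Qed.

Lemma step_mren s s' : step s s' -> forall h, Injective h -> step (mren h s) (mren h s').
Proof.
  induction 1; intros h Hh; simpl.
  - rewrite mren_subst0. constructor.
  - rewrite mren_ssub by (apply upren_injective; auto). simpl.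
    rewrite !mren_comp. simpl.
    replace (mren (fun x => S (h x)) v) with (mren S (mren h v)) by apply mren_comp.
    apply st_mu.
  - constructor; auto.
  - constructor; auto.
  - constructor; auto.
  - constructor. apply IHstep, upren_injective, Hh.
  - constructor; auto.
Qed.

Lemma red_mren s s' : red s s' -> forall h, Injective h -> red (mren h s) (mren h s').
Proof.
  induction 1; intros h Hh; [constructor|].
  econstructor; [apply step_mren|]; eauto.
Qed.

Lemma red_trans a b c : red a b -> red b c -> red a c.
Proof. induction 1; intros; auto. econstructor; eauto. Qed.

Lemma red_cong (F : term -> term) :
  (forall a b, step a b -> step (F a) (F b)) -> forall a b, red a b -> red (F a) (F b).
Proof. intros HF; induction 1; [constructor | econstructor; eauto]. Qed.

Lemma step_apps l : forall a b, step a b -> step (apps a l) (apps b l).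
Proof. induction l; intros; simpl; auto. apply IHl. constructor; auto. Qed.

Lemma apps_app l1 l2 t : apps t (l1 ++ l2) = apps (apps t l1) l2.
Proof. apply fold_left_app. Qed.

Lemma mren_apps l : forall t h, mren h (apps t l) = apps (mren h t) (map (mren h) l).
Proof. induction l; intros; simpl; [reflexivity|]. apply IHl. Qed.

Lemma ssub_apps l : forall t k w, ssub k w (apps t l) = apps (ssub k w t) (map (ssub k w) l).
Proof. induction l; intros; simpl; [reflexivity|]. apply IHl. Qed.

Lemma lsubst_apps l : forall t s, lsubst s (apps t l) = apps (lsubst s t) (map (lsubst s) l).
Proof. induction l; intros; simpl; [reflexivity|]. apply IHl. Qed.

(** * Substitution with stacks *)

Definition mscons (l : list term) (r : nat -> list term) : nat -> list term :=
  fun a => match a with 0 => l | S a => r a end.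

Fixpoint stack_sub (sg : nat -> term) (z : nat -> nat) (r : nat -> list term)
    (t : term) : term :=
  match t with
  | Var x => sg x
  | Lam t => Lam (stack_sub (upsub sg) z (fun a => map (lren S) (r a)) t)
  | App t1 t2 => App (stack_sub sg z r t1) (stack_sub sg z r t2)
  | Mu t => Mu (stack_sub (fun x => mren S (sg x)) (upren z)
                  (mscons [] (fun a => map (mren S) (r a))) t)
  | MApp a t => MApp (z a) (apps (stack_sub sg z r t) (r a))
  end.

Lemma stack_sub_id t : stack_sub Var (fun x => x) (fun _ => []) t = t.
Proof.
  induction t; simpl; f_equal; auto.
  - rewrite <- IHt at 2. f_equal. apply functional_extensionality; intros [|x]; reflexivity.
  - rewrite <- IHt at 2. f_equal; apply functional_extensionality; intros [|x]; reflexivity.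
Qed.

Lemma lsubst_stack_sub t : forall s sg z r,
  lsubst s (stack_sub sg z r t)
  = stack_sub (fun x => lsubst s (sg x)) z (fun a => map (lsubst s) (r a)) t.
Proof.
  induction t; intros s sg z r; simpl; f_equal; auto.
  - rewrite IHt. f_equal.
    + apply functional_extensionality; intros [|x]; simpl; auto.
      rewrite lsubst_lren, lren_lsubst. reflexivity.
    + apply functional_extensionality; intros a. rewrite !map_map. apply map_ext; intro y.
      rewrite lsubst_lren, lren_lsubst. reflexivity.
  - rewrite IHt. f_equal.
    + apply functional_extensionality; intros x. symmetry. apply mren_lsubst.
    + apply functional_extensionality; intros [|a]; simpl; auto.
      rewrite !map_map. apply map_ext; intro y. symmetry. apply mren_lsubst.
  - rewrite lsubst_apps, IHt. reflexivity.
Qed.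

Lemma subst0_stack_sub t s sg z r :
  subst0 (stack_sub (upsub sg) z (fun a => map (lren S) (r a)) t) s
  = stack_sub (fun x => match x with 0 => s | S x => sg x end) z r t.
Proof.
  unfold subst0. rewrite lsubst_stack_sub. f_equal.
  - apply functional_extensionality; intros [|x]; simpl; [reflexivity|].
    rewrite lsubst_lren. apply lsubst_var.
  - apply functional_extensionality; intros a. rewrite map_map.
    rewrite (map_ext _ (fun y => y)) by (intro y; rewrite lsubst_lren; apply lsubst_var).
    apply map_id.
Qed.

Lemma mren_stack_sub t : forall h sg z r,
  mren h (stack_sub sg z r t)
  = stack_sub (fun x => mren h (sg x)) (fun a => h (z a)) (fun a => map (mren h) (r a)) t.
Proof.
  induction t; intros h sg z r; simpl; f_equal; auto.
  - rewrite IHt. f_equal.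
    + apply functional_extensionality; intros [|x]; simpl; auto. symmetry. apply lren_mren.
    + apply functional_extensionality; intros a. rewrite !map_map. apply map_ext; intro y.
      symmetry. apply lren_mren.
  - rewrite IHt. f_equal.
    + apply functional_extensionality; intros x. rewrite !mren_comp. reflexivity.
    + apply functional_extensionality; intros [|a]; reflexivity.
    + apply functional_extensionality; intros [|a]; simpl; auto.
      rewrite !map_map. apply map_ext; intro y. rewrite !mren_comp. reflexivity.
  - rewrite mren_apps, IHt. reflexivity.
Qed.

Fixpoint mfresh (k : nat) (t : term) : Prop :=
  match t with
  | Var _ => True
  | Lam t => mfresh k t
  | App t1 t2 => mfresh k t1 /\ mfresh k t2
  | Mu t => mfresh (S k) t
  | MApp a t => a <> k /\ mfresh k t
  end.

Lemma ssub_mfresh t : forall k w, mfresh k t -> ssub k w t = t.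
Proof.
  induction t; intros k w H; simpl in *; try (f_equal; intuition auto; fail).
  destruct H as [H1 H2]. destruct (Nat.eqb_spec n k); [contradiction|]. f_equal; auto.
Qed.

Lemma mfresh_lren t : forall k g, mfresh k t -> mfresh k (lren g t).
Proof. induction t; intros k g H; simpl in *; intuition auto. Qed.

Lemma mfresh_mren_avoid t : forall k h, (forall x, h x <> k) -> mfresh k (mren h t).
Proof.
  induction t; intros k h H; simpl; auto.
  apply IHt. intros [|x]; simpl; [discriminate|]. specialize (H x). congruence.
Qed.

Lemma mfresh_mren t : forall k h, Injective h -> mfresh k t -> mfresh (h k) (mren h t).
Proof.
  induction t; intros k h Hh H; simpl in *; try (intuition auto; fail).
  apply (IHt (S k) (upren h)); auto. apply upren_injective; auto.
Qed.

Definition snoc_at (r : nat -> list term) (c : nat) (w : term) : nat -> list term :=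
  fun a => if Nat.eqb a c then r a ++ [w] else r a.

Lemma ssub_stack_sub t : forall k c w sg z r,
  z c = k -> (forall a, z a = k -> a = c) ->
  (forall x, mfresh k (sg x)) -> (forall a y, In y (r a) -> mfresh k y) ->
  ssub k w (stack_sub sg z r t) = stack_sub sg z (snoc_at r c w) t.
Proof.
  induction t; intros k c w sg z r Hc Hu Hs Hr; simpl.
  - apply ssub_mfresh; auto.
  - f_equal. rewrite IHt with (c := c); auto.
    + f_equal. apply functional_extensionality; intro a. unfold snoc_at.
      destruct (Nat.eqb a c); auto. symmetry. apply map_app.
    + intros [|x]; simpl; auto. apply mfresh_lren; auto.
    + intros a y Hy. apply in_map_iff in Hy. destruct Hy as [y' [<- Hy']].
      apply mfresh_lren; eauto.
  - f_equal; eauto.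
  - f_equal. rewrite IHt with (c := S c); auto.
    + f_equal. apply functional_extensionality; intros [|a]; unfold snoc_at, mscons; simpl; auto.
      destruct (Nat.eqb a c); auto. symmetry. apply map_app.
    + simpl. congruence.
    + intros [|a]; simpl; [discriminate|]. intro E; injection E as E. f_equal; auto.
    + intros x. apply (mfresh_mren _ _ S); auto. exact Nat.succ_inj.
    + intros [|a] y Hy; simpl in Hy; [contradiction|].
      apply in_map_iff in Hy. destruct Hy as [y' [<- Hy']].
      apply (mfresh_mren _ _ S); eauto. exact Nat.succ_inj.
  - rewrite ssub_apps, (IHt k c) by auto.
    rewrite (map_ext_in _ (fun x => x)) by (intros y Hy; apply ssub_mfresh; eauto).
    rewrite map_id. unfold snoc_at.
    destruct (Nat.eqb_spec (z n) k) as [E|E].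
    + rewrite (Hu _ E), Nat.eqb_refl, apps_app. reflexivity.
    + destruct (Nat.eqb_spec n c) as [->|Hnc]; [congruence | reflexivity].
Qed.

Lemma red_apps_mu_stack t pi : forall sg z l r,
  (forall x, mfresh 0 (sg x)) -> (forall a y, In y (r a) -> mfresh 0 y) ->
  (forall y, In y l -> mfresh 0 y) -> z 0 = 0 -> (forall a, z a = 0 -> a = 0) ->
  red (apps (Mu (stack_sub sg z (mscons l r) t)) pi)
      (Mu (stack_sub sg z (mscons (l ++ map (mren S) pi) r) t)).
Proof.
  induction pi as [|w pi IH]; intros sg z l r Hs Hr Hl Hz Hu; simpl.
  - rewrite app_nil_r. constructor.
  - econstructor; [apply step_apps, st_mu|].
    rewrite (ssub_stack_sub t 0 0); auto.
    + replace (snoc_at (mscons l r) 0 (mren S w)) with (mscons (l ++ [mren S w]) r)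
        by (apply functional_extensionality; intros [|a]; reflexivity).
      replace (l ++ mren S w :: map (mren S) pi) with ((l ++ [mren S w]) ++ map (mren S) pi)
        by (rewrite <- app_assoc; reflexivity).
      apply IH; auto.
      intros y Hy. apply in_app_or in Hy. destruct Hy as [Hy|[<-|[]]]; auto.
      apply mfresh_mren_avoid. discriminate.
    + intros [|a] y Hy; simpl in Hy; eauto.
Qed.

Lemma red_apps_mu t pi sg z r :
  red (apps (stack_sub sg z r (Mu t)) pi)
      (Mu (stack_sub (fun x => mren S (sg x)) (upren z)
             (mscons (map (mren S) pi) (fun a => map (mren S) (r a))) t)).
Proof.
  apply red_apps_mu_stack.
  - intros x. apply mfresh_mren_avoid. discriminate.
  - intros a y Hy. apply in_map_iff in Hy. destruct Hy as [y' [<- _]].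
    apply mfresh_mren_avoid. discriminate.
  - intros y [].
  - reflexivity.
  - intros [|a]; simpl; [auto | discriminate].
Qed.

Lemma red_apps_beta t s pi : red (apps (App (Lam t) s) pi) (apps (subst0 t s) pi).
Proof. econstructor; [apply step_apps, st_beta | constructor]. Qed.

(** * Fresh names for mu-binders *)

Fixpoint mbound (t : term) : nat :=
  match t with
  | Var _ => 0
  | Lam t => mbound t
  | App t1 t2 => max (mbound t1) (mbound t2)
  | Mu t => mbound t - 1
  | MApp a t => max (S a) (mbound t)
  end.

Lemma mren_mbound t : forall f, (forall x, x < mbound t -> f x = x) -> mren f t = t.
Proof.
  induction t; intros f H; simpl; cbn [mbound] in H.
  - reflexivity.
  - f_equal; auto.
  - f_equal; [apply IHt1 | apply IHt2]; intros; apply H; lia.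
  - f_equal. apply IHt. intros [|x] Hx; simpl; auto. f_equal. apply H. lia.
  - f_equal; [apply H; lia|]. apply IHt; intros; apply H; lia.
Qed.

Lemma mbound_in_list_sum l w : In w l -> mbound w <= list_sum (map mbound l).
Proof.
  induction l as [|w' l IH]; simpl; intros Hw; [contradiction|].
  destruct Hw as [<-|Hw]; [lia|]. specialize (IH Hw). lia.
Qed.

Definition unbindm (a : nat) (y : nat) : nat :=
  match y with 0 => a | S j => if j <? a then j else S j end.

Lemma bindm_unbindm a y : bindm a (unbindm a y) = y.
Proof.
  destruct y as [|j]; unfold bindm, unbindm.
  - rewrite Nat.eqb_refl; auto.
  - destruct (Nat.ltb_spec j a).
    + destruct (Nat.eqb_spec j a); [lia|]. destruct (Nat.ltb_spec j a); [auto|lia].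
    + destruct (Nat.eqb_spec (S j) a); [lia|]. destruct (Nat.ltb_spec (S j) a); [lia|auto].
Qed.

Lemma unbindm_bindm a x : unbindm a (bindm a x) = x.
Proof.
  unfold bindm, unbindm.
  destruct (Nat.eqb_spec x a); [auto|].
  destruct (Nat.ltb_spec x a).
  - destruct (Nat.ltb_spec x a); [auto|lia].
  - destruct x as [|x]; [lia|]. destruct (Nat.ltb_spec x a); [lia|auto].
Qed.

Lemma bindm_injective a : Injective (bindm a).
Proof. intros x y E. rewrite <- (unbindm_bindm a x), <- (unbindm_bindm a y), E. reflexivity. Qed.

Lemma unbindm_injective a : Injective (unbindm a).
Proof. intros x y E. rewrite <- (bindm_unbindm a x), <- (bindm_unbindm a y), E. reflexivity. Qed.

Lemma redM_mapp s t a : redM s t -> redM (MApp a s) t.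
Proof.
  intros [s' [R I]]. exists (MApp a s'). split; [|constructor; auto].
  apply (red_cong (MApp a)); auto. intros; constructor; auto.
Qed.

Lemma redM_mu s t a : redM s t -> redM (Mu (mren (bindm a) s)) t.
Proof.
  intros [s' [R I]]. exists (Mu (mren (bindm a) s')). split; [|constructor; auto].
  apply (red_cong Mu); [intros; constructor; auto|].
  apply red_mren; auto. apply bindm_injective.
Qed.

Section Realizability.
Variable u : term.
Variable ws : list term.
Variable v : nat -> term.

(** * Observable terms and realizers *)

Inductive observable : nat -> (nat -> nat) -> term -> Prop :=
| observable_v : forall k f i, 1 <= i <= k ->
    observable k f (apps (mren f (v i)) (map (mren f) ws))
| observable_u : forall k f th s,
    red (App th (mren f (v (S k)))) s -> observable (S k) f s ->
    observable k f (apps (App (mren f u) th) (map (mren f) ws))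
| observable_mapp : forall k f a s, observable k f s -> observable k f (MApp a s)
| observable_mu : forall k f s, observable k (fun x => S (f x)) s -> observable k f (Mu s).

Definition good k f t := exists t', red t t' /\ observable k f t'.

Lemma good_red k f s s' : red s s' -> good k f s' -> good k f s.
Proof. intros R [t [R' C]]. exists t. split; auto. eapply red_trans; eauto. Qed.

Lemma good_mapp k f a s : good k f s -> good k f (MApp a s).
Proof.
  intros [t [R C]]. exists (MApp a t). split; [|constructor; auto].
  apply (red_cong (MApp a)); auto. intros; constructor; auto.
Qed.

Lemma good_mu k f s : good k (fun x => S (f x)) s -> good k f (Mu s).
Proof.
  intros [t [R C]]. exists (Mu t). split; [|constructor; auto].
  apply (red_cong Mu); auto. intros; constructor; auto.
Qed.

(* Quantifying over larger levels and further injective mu-renamings makes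
   realizers stable under the shifts caused by mu-binders. *)
Definition orth (P : nat -> (nat -> nat) -> list term -> Prop) k f s :=
  forall j h pi, k <= j -> Injective h -> P j (fun x => h (f x)) pi ->
    good j (fun x => h (f x)) (apps (mren h s) pi).

Fixpoint stacks (A : ty) (k : nat) (f : nat -> nat) (pi : list term) : Prop :=
  match A with
  | TVar _ => pi = map (mren f) ws
  | Bot => pi = []
  | Arr A B => exists s pi', pi = s :: pi' /\ orth (stacks A) k f s /\ stacks B k f pi'
  end.

Definition realizes A := orth (stacks A).

Lemma realizes_mono A k f s j h :
  k <= j -> Injective h -> realizes A k f s -> realizes A j (fun x => h (f x)) (mren h s).
Proof.
  intros Hkj Hh HR j' h' pi Hj Hh' HS.
  rewrite mren_comp.
  apply (HR j' (fun x => h' (h x))); [lia | apply compose_injective; auto | exact HS].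
Qed.

Lemma stacks_mono A : forall k f pi j h, k <= j -> Injective h ->
  stacks A k f pi -> stacks A j (fun x => h (f x)) (map (mren h) pi).
Proof.
  induction A as [| |A _ B IHB]; intros k f pi j h Hkj Hh HS; simpl in *.
  - subst. rewrite map_map. apply map_ext. intro; apply mren_comp.
  - subst. reflexivity.
  - destruct HS as [s [pi' [-> [HR HB]]]].
    exists (mren h s), (map (mren h) pi'). split; [reflexivity|].
    split; [apply (realizes_mono A k f s j h) | eapply IHB]; eauto.
Qed.

Lemma realizes_apps A k j f s pi :
  realizes A k f s -> k <= j -> stacks A j f pi -> good j f (apps s pi).
Proof.
  intros HR Hkj HS. rewrite <- (mren_id s).
  apply (HR j (fun x => x)); auto using id_injective.
Qed.

(** * Adequacy *)

Definition env_realizes (G : list ty) k f (sg : nat -> term) :=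
  forall x B, nth_error G x = Some B -> realizes B k f (sg x).

Definition env_stacks (D : list ty) k f (r : nat -> list term) :=
  forall a B, nth_error D a = Some B -> stacks B k f (r a).

Lemma env_realizes_mono G k f sg j h : k <= j -> Injective h ->
  env_realizes G k f sg -> env_realizes G j (fun x => h (f x)) (fun x => mren h (sg x)).
Proof. intros Hkj Hh HG x B Hx. apply (realizes_mono B k); auto. Qed.

Lemma env_stacks_mono D k f r j h : k <= j -> Injective h ->
  env_stacks D k f r -> env_stacks D j (fun x => h (f x)) (fun a => map (mren h) (r a)).
Proof. intros Hkj Hh HD a B Ha. eapply stacks_mono; eauto. Qed.

Definition adequate G D t A := forall k f sg z r,
  env_realizes G k f sg -> env_stacks D k f r ->
  forall pi, stacks A k f pi -> good k f (apps (stack_sub sg z r t) pi).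

Lemma adequate_var G D x A : nth_error G x = Some A -> adequate G D (Var x) A.
Proof.
  intros Hx k f sg z r HG HD pi HS.
  apply (realizes_apps A k k); [apply HG, Hx | lia | exact HS].
Qed.

Lemma adequate_lam G D t A B : adequate (A :: G) D t B -> adequate G D (Lam t) (Arr A B).
Proof.
  intros Ht k f sg z r HG HD pi [s [pi' [-> [Hs Hpi']]]].
  eapply good_red; [apply red_apps_beta|].
  rewrite subst0_stack_sub. apply Ht; auto.
  intros [|x] B' Hx; simpl in Hx; [injection Hx as <-; exact Hs | exact (HG x B' Hx)].
Qed.

Lemma adequate_app G D t s A B :
  adequate G D t (Arr A B) -> adequate G D s A -> adequate G D (App t s) B.
Proof.
  intros Ht Hs k f sg z r HG HD pi Hpi.
  apply (Ht k f sg z r HG HD (stack_sub sg z r s :: pi)).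
  exists (stack_sub sg z r s), pi. split; [reflexivity|]. split; [|exact Hpi].
  intros j h pi0 Hj Hh Hpi0. rewrite mren_stack_sub.
  apply Hs; [apply (env_realizes_mono G k) | apply (env_stacks_mono D k) | ]; auto.
Qed.

Lemma adequate_mu G D t A : adequate G (A :: D) t Bot -> adequate G D (Mu t) A.
Proof.
  intros Ht k f sg z r HG HD pi Hpi.
  eapply good_red; [apply red_apps_mu|]. apply good_mu.
  apply (fun HG HD => Ht k (fun x => S (f x)) _ _ _ HG HD [] eq_refl).
  - apply (env_realizes_mono G k); auto. exact Nat.succ_inj.
  - intros [|a] B Ha; simpl in Ha.
    + injection Ha as <-. apply (stacks_mono A k); auto. exact Nat.succ_inj.
    + apply (env_stacks_mono D k); auto. exact Nat.succ_inj.
Qed.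

Lemma adequate_bot G D a t A :
  nth_error D a = Some A -> adequate G D t A -> adequate G D (MApp a t) Bot.
Proof.
  intros Ha Ht k f sg z r HG HD pi Hpi. simpl in Hpi. subst pi.
  apply good_mapp. apply Ht; auto.
Qed.

Lemma adequacy G D t A : typ G D t A -> adequate G D t A.
Proof.
  induction 1;
    eauto using adequate_var, adequate_lam, adequate_app, adequate_mu, adequate_bot.
Qed.

Lemma realizes_v X k f i : 1 <= i <= k -> realizes (TVar X) k f (mren f (v i)).
Proof.
  intros Hi j h pi Hkj Hh Hpi. simpl in Hpi. subst pi. rewrite mren_comp.
  exists (apps (mren (fun x => h (f x)) (v i)) (map (mren (fun x => h (f x))) ws)).
  split; [constructor | apply observable_v; lia].
Qed.

Lemma realizes_u X k f : realizes (Arr (neg (TVar X)) (TVar X)) k f (mren f u).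
Proof.
  intros j h pi Hkj Hh [th [pi' [-> [Hth Hpi']]]]. simpl in Hpi'. subst pi'.
  assert (Hv : good (S j) (fun x => h (f x)) (App th (mren (fun x => h (f x)) (v (S j))))).
  { apply (realizes_apps (neg (TVar X)) j (S j) _ th [_] Hth); [lia|].
    exists (mren (fun x => h (f x)) (v (S j))), []. split; [reflexivity|].
    split; [apply realizes_v; lia | reflexivity]. }
  destruct Hv as [s [R C]]. rewrite mren_comp.
  eexists; split; [constructor | eapply observable_u; eauto].
Qed.

Lemma good_E_u E X : typ nil nil E (Arr (Arr (neg (TVar X)) (TVar X)) (TVar X)) ->
  good 0 (fun x => x) (apps (App E u) ws).
Proof.
  intros HE. rewrite <- (stack_sub_id E).
  change (good 0 (fun x => x) (apps (stack_sub Var (fun x => x) (fun _ => []) E) (u :: ws))).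
  apply (adequacy _ _ _ _ HE).
  - intros [|x] B Hx; discriminate.
  - intros [|a] B Ha; discriminate.
  - exists u, ws. split; [reflexivity|]. split; [|symmetry; apply map_mren_id].
    rewrite <- (mren_id u). apply realizes_u.
Qed.

(** * Extraction of the sequence *)

Fixpoint vbound (M : nat) : nat :=
  match M with 0 => mbound (v 0) | S M => mbound (v (S M)) + vbound M end.

Lemma vbound_ge M i : i <= M -> mbound (v i) <= vbound M.
Proof.
  induction M; intros Hi; simpl.
  - replace i with 0 by lia. lia.
  - destruct (Nat.eq_dec i (S M)) as [->|Hne]; [lia|]. specialize (IHM ltac:(lia)). lia.
Qed.

Lemma vbound_mono M N : M <= N -> vbound M <= vbound N.
Proof. induction 1; simpl; lia. Qed.

Definition bound M := mbound u + list_sum (map mbound ws) + vbound M.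

Lemma mren_retract M f g t : (forall x, x < bound M -> g (f x) = x) -> mbound t <= bound M ->
  mren g (mren f t) = t.
Proof. intros Hgf Ht. rewrite mren_comp. apply mren_mbound. intros; apply Hgf; lia. Qed.

Lemma map_mren_retract M f g : (forall x, x < bound M -> g (f x) = x) ->
  map (mren g) (map (mren f) ws) = ws.
Proof.
  intros Hgf. rewrite map_map, (map_ext_in _ (fun x => x)); [apply map_id|].
  intros w Hw. apply (mren_retract M); auto.
  pose proof (mbound_in_list_sum _ _ Hw). unfold bound; lia.
Qed.

Inductive chain : nat -> term -> Prop :=
| chain_v : forall k s i, 1 <= i <= k -> redM s (apps (v i) ws) -> chain k s
| chain_u : forall k s th, redM s (apps (App u th) ws) ->
    chain (S k) (App th (v (S k))) -> chain k s.

Lemma chain_transfer k s s' : (forall t, redM s t -> redM s' t) -> chain k s -> chain k s'.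
Proof. intros H C. destruct C; [eapply chain_v | eapply chain_u]; eauto. Qed.

Lemma chain_red k s s' : red s' s -> chain k s -> chain k s'.
Proof.
  intros R. apply chain_transfer. intros t [s'' [R' I]].
  exists s''. split; auto. eapply red_trans; eauto.
Qed.

Definition extractable k f s := exists M, forall g, Injective g ->
  (forall x, x < bound M -> g (f x) = x) -> chain k (mren g s).

Lemma extractable_mapp k f a s : extractable k f s -> extractable k f (MApp a s).
Proof.
  intros [M HM]. exists M. intros g Hg Hgf. simpl.
  apply (chain_transfer k (mren g s)); [intro; apply redM_mapp | apply HM; auto].
Qed.

(* The binder is named [bound M], which is fresh for the data it can reach. *)
Lemma extractable_mu k f s : extractable k (fun x => S (f x)) s -> extractable k f (Mu s).
Proof.
  intros [M HM]. exists M. intros g Hg Hgf. simpl.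
  set (g' := fun x => unbindm (bound M) (upren g x)).
  assert (E : mren (upren g) s = mren (bindm (bound M)) (mren g' s)).
  { rewrite mren_comp. f_equal. apply functional_extensionality; intro x.
    unfold g'. rewrite bindm_unbindm. reflexivity. }
  rewrite E. apply (chain_transfer k (mren g' s)); [intro; apply redM_mu|].
  apply HM.
  - unfold g'. apply compose_injective; [apply unbindm_injective | apply upren_injective; auto].
  - intros x Hx. unfold g'. simpl. rewrite Hgf by auto. unfold unbindm.
    destruct (Nat.ltb_spec x (bound M)); [reflexivity | lia].
Qed.

Lemma observable_extractable k f s : observable k f s -> extractable k f s.
Proof.
  induction 1 as [k f i Hi | k f th s R _ [M HM] | | ];
    auto using extractable_mapp, extractable_mu.
  - exists i. intros g Hg Hgf.
    rewrite mren_apps, (map_mren_retract i f g Hgf), (mren_retract i f g)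
      by (auto; pose proof (vbound_ge i i (le_n _)); unfold bound; lia).
    apply chain_v with i; auto. exists (apps (v i) ws). split; constructor.
  - exists (max (S k) M). intros g Hg Hgf.
    rewrite mren_apps, (map_mren_retract _ f g Hgf). simpl.
    rewrite (mren_retract (max (S k) M) f g u) by (auto; unfold bound; lia).
    apply chain_u with (mren g th); [exists (apps (App u (mren g th)) ws); split; constructor|].
    apply (chain_red (S k) (mren g s)).
    + rewrite <- (mren_retract (max (S k) M) f g (v (S k))); auto.
      * apply (red_mren (App th (mren f (v (S k))))); auto.
      * pose proof (vbound_ge (max (S k) M) (S k) ltac:(lia)). unfold bound; lia.
    + apply HM; auto. intros x Hx. apply Hgf.
      pose proof (vbound_mono M (max (S k) M) ltac:(lia)). unfold bound in *; lia.
Qed.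

Lemma good_chain k t : good k (fun x => x) t -> chain k t.
Proof.
  intros [s [R C]]. apply (chain_red k s); auto.
  destruct (observable_extractable _ _ _ C) as [M HM].
  rewrite <- (mren_id s). apply HM; auto using id_injective.
Qed.

Lemma chain_sequence k s : chain k s ->
  (exists i, 1 <= i <= k /\ redM s (apps (v i) ws)) \/
  exists m th, k < m /\ redM s (apps (App u (th (S k))) ws) /\
    (forall i, S k <= i <= m - 1 -> redM (App (th i) (v i)) (apps (App u (th (i + 1))) ws)) /\
    (exists i, 1 <= i <= m /\ redM (App (th m) (v m)) (apps (v i) ws)).
Proof.
  induction 1 as [k s i Hi R | k s th R _ [[i [Hi R']] | [m [th' [Hm [R' [Hth Hfin]]]]]]].
  - left; eauto.
  - right. exists (S k), (fun _ => th).
    split; [lia|]. split; [exact R|]. split; [intros; lia|].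
    exists i; split; [lia | exact R'].
  - right. exists m, (fun i => if i =? S k then th else th' i).
    rewrite Nat.eqb_refl. split; [lia|]. split; [exact R|]. split.
    + intros i Hi. destruct (Nat.eqb_spec i (S k)) as [->|Hik].
      * destruct (Nat.eqb_spec (S k + 1) (S k)); [lia|].
        replace (S k + 1) with (S (S k)) by lia. exact R'.
      * destruct (Nat.eqb_spec (i + 1) (S k)); [lia|]. apply Hth; lia.
    + destruct (Nat.eqb_spec m (S k)); [lia | exact Hfin].
Qed.

End Realizability.

Theorem mainTheorem10 :
  forall (E : term) (X : nat),
    typ nil nil E (Arr (Arr (neg (TVar X)) (TVar X)) (TVar X)) ->
    forall (u : term) (ws : list term) (v : nat -> term),
    exists (m : nat) (th : nat -> term),
      redM (apps (App E u) ws) (apps (App u (th 1)) ws) /\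
      (forall i, 1 <= i <= m - 1 ->
         redM (App (th i) (v i)) (apps (App u (th (i + 1))) ws)) /\
      (exists i, 1 <= i <= m /\ redM (App (th m) (v m)) (apps (v i) ws)).
Proof.
  intros E X HE u ws v.
  pose proof (good_chain u ws v 0 _ (good_E_u u ws v E X HE)) as Hchain.
  destruct (chain_sequence u ws v 0 _ Hchain) as [[i [Hi _]] | [m [th [_ [H1 [H2 H3]]]]]];
    [lia|].
  exists m, th. split; [exact H1|]. split; [|exact H3].
  intros i Hi. apply H2. lia.
Qed.
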